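(* Let $n\ge1$, $U_n$ the family of bounded subsets of $\mathbb R^n$, and let $\mu:U_n\to B_2$ be a measure that is derivable on the closed set $A\in U_n$ (so $A$ is compact). Then the set $\mathrm{supp}_A\, d\mu=\{x\in A: d\mu(x)=1\}$ is finite.
   Context: $B_2=\{0,1\}$. $\mu:U_n\to B_2$ is a measure if for every sequence $(A_p)$ of pairwise disjoint sets of $U_n$ with $\bigcup_pA_p\in U_n$, the set $\{p:\mu(A_p)=1\}$ is finite and $\mu(\bigcup_pA_p)$ equals the number of such $p$ modulo 2. For bounded $B$, $d(B)=\sup_{x,y\in B}\|x-y\|$ (Euclidean). $\mu$ is derivable at $x\in A$ (where $A\in U_n$) if there exist $\varepsilon>0$ and $a\in B_2$ such that for all $B\in U_n$ with $x\in B$ and $d(B)<\varepsilon$, $\mu(B)=a$; this $a$ (necessarily $a=\mu(\{x\})$) is the derivative $d\mu(x)$. $\mu$ is derivable on $A$ if it is derivable at every $x\in A$. *)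

From HB Require Import structures.
From mathcomp Require Import all_boot all_order all_algebra.
From mathcomp Require Import all_classical all_reals all_analysis.
Set Implicit Arguments. Unset Strict Implicit. Unset Printing Implicit Defensive.
Import Order.TTheory GRing.Theory Num.Theory.
Import numFieldNormedType.Exports.
Local Open Scope classical_set_scope.
Local Open Scope ring_scope.

Definition edist (R : realType) (n : nat) (x y : 'rV[R]_n) : R :=
  Num.sqrt (\sum_(i < n) (x ord0 i - y ord0 i) ^+ 2).

Definition ebounded (R : realType) (n : nat) (B : set 'rV[R]_n) : Prop :=
  exists M : R, forall x, B x -> edist x 0 <= M.

Definition diam (R : realType) (n : nat) (B : set 'rV[R]_n) : \bar R :=
  ereal_sup [set ((edist x y)%:E) | x in B & y in B].

(* μ : U_n -> B_2 = {0,1} (represented by bool, 1 = true) is a measure: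
   for every sequence of pairwise disjoint bounded sets with bounded union,
   only finitely many A_p have μ(A_p) = 1 and μ(⋃ A_p) is the parity of
   their number. Values of μ on unbounded sets are irrelevant. *)
Definition B2_measure (R : realType) (n : nat) (mu : set 'rV[R]_n -> bool) : Prop :=
  forall A : nat -> set 'rV[R]_n,
    (forall p, ebounded (A p)) ->
    trivIset setT A ->
    ebounded (\bigcup_p A p) ->
    exists N : nat,
      (forall p, (N <= p)%N -> mu (A p) = false) /\
      mu (\bigcup_p A p) = odd (\sum_(p < N) nat_of_bool (mu (A p))).

Definition deriv_is (R : realType) (n : nat) (mu : set 'rV[R]_n -> bool)
    (x : 'rV[R]_n) (a : bool) : Prop :=
  exists2 eps : R, 0 < eps &
    forall B : set 'rV[R]_n, ebounded B -> B x -> (diam B < eps%:E)%E -> mu B = a.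

Definition derivable_at (R : realType) (n : nat) (mu : set 'rV[R]_n -> bool)
    (x : 'rV[R]_n) : Prop := exists a : bool, deriv_is mu x a.

Definition derivable_on (R : realType) (n : nat) (mu : set 'rV[R]_n -> bool)
    (A : set 'rV[R]_n) : Prop := forall x, A x -> derivable_at mu x.

Definition supp_deriv (R : realType) (n : nat) (mu : set 'rV[R]_n -> bool)
    (A : set 'rV[R]_n) : set 'rV[R]_n :=
  [set x | A x /\ deriv_is mu x true].

From Pilot Require Import Defs.
From mathcomp Require Import all_boot all_order all_algebra.
From mathcomp Require Import all_classical all_reals all_analysis.
Import numFieldNormedType.Exports.
Import Order.TTheory GRing.Theory Num.Theory.
Local Open Scope classical_set_scope.
Local Open Scope ring_scope.

(* A point x with dμ(x) = 1 has μ({x}) = 1, because d({x}) = 0 is below every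
   ε > 0.  Infinitely many such points in the bounded set A would give a
   disjoint sequence of singletons with bounded union on which μ takes the
   value 1 infinitely often, contradicting the measure axiom. *)

Section BoundedSets.
Context {R : realType} {n : nat}.
Implicit Types (x : 'rV[R]_n) (B E : set 'rV[R]_n) (mu : set 'rV[R]_n -> bool).

Lemma edistxx x : Defs.edist x x = 0.
Proof.
by rewrite /Defs.edist big1 ?sqrtr0 // => i _; rewrite subrr expr0n.
Qed.

Lemma diam_set1 x : diam [set x] = 0%E.
Proof.
rewrite /diam; set S := (X in ereal_sup X).
have -> : S = [set 0%E].
  apply/seteqP; split => z /=.
  - by case=> a -> [b -> <-]; rewrite edistxx.
  - by move->; exists x => //; exists x => //; rewrite edistxx.
exact: ereal_sup1.
Qed.

Lemma ebounded_set1 x : ebounded [set x].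
Proof. by exists (Defs.edist x 0) => y ->. Qed.

Lemma ebounded_subset B E : B `<=` E -> ebounded E -> ebounded B.
Proof. by move=> BE [M HM]; exists M => y /BE /HM. Qed.

Lemma deriv_is_set1 mu x (a : bool) :
  deriv_is mu x a -> mu [set x] = a.
Proof.
case=> eps eps_gt0 mu_small; apply: mu_small => //; first exact: ebounded_set1.
by rewrite diam_set1 lte_fin.
Qed.

Lemma B2_measure_finite_atoms {mu E} :
  B2_measure mu -> ebounded E -> finite_set [set x | E x /\ mu [set x]].
Proof.
move=> mu_measure E_bounded; apply: contrapT => /infiniteP/ppcard_leP[f].
have f_atom p : E (f p) /\ mu [set f p] by exact: ('funS_ f) p I.
have f_inj : injective f.
  by move=> p q; exact: ('inj_ f) (in_setT _) (in_setT _).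
have [|||N [mu_tail _]] := mu_measure (fun p => [set f p]).
- by move=> p; exact: ebounded_set1.
- by move=> p q _ _ [y [/= -> /f_inj]].
- by apply: ebounded_subset E_bounded => _ [p _ ->]; case: (f_atom p).
by have [_] := f_atom N; rewrite mu_tail.
Qed.

End BoundedSets.

Theorem theorem5p13 (R : realType) (n : nat) (mu : set 'rV[R]_n -> bool)
    (A : set 'rV[R]_n) :
  (0 < n)%N ->
  B2_measure mu ->
  ebounded A ->
  closed A ->
  derivable_on mu A ->
  finite_set (supp_deriv mu A).
Proof.
move=> _ mu_measure A_bounded _ _.
have supp_atoms : supp_deriv mu A `<=` [set x | A x /\ mu [set x]].
  by move=> x [Ax /deriv_is_set1 mu_x]; rewrite /= mu_x.
exact: sub_finite_set supp_atoms (B2_measure_finite_atoms mu_measure A_bounded).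
Qed.
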